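(* There exists an absolute constant $c>0$ such that every $3$-graph $\mathcal{T}$ on five vertices with at most eight edges satisfies $\lambda(\mathcal{T})<2/27-c$.
   Context: For a $3$-graph $\mathcal{T}$ on $[s]$, $p_{\mathcal{T}}(x)=\sum_{E\in\mathcal{T}}\prod_{i\in E}x_i$ and the Lagrangian is $\lambda(\mathcal{T})=\max\{p_{\mathcal{T}}(x): x\in\mathbb{R}^s,\ x_i\ge0,\ \sum_i x_i=1\}$. *)

From mathcomp Require Import all_boot all_order all_algebra.
From mathcomp Require Import all_classical all_reals.
Set Implicit Arguments. Unset Strict Implicit. Unset Printing Implicit Defensive.
Import Order.TTheory GRing.Theory Num.Theory.
Local Open Scope ring_scope.
Local Open Scope classical_set_scope.

Definition is_3graph (s : nat) (T : {set {set 'I_s}}) : bool :=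
  [forall E in T, #|E| == 3%N].

Definition lagr_poly (R : realType) (s : nat) (T : {set {set 'I_s}})
  (x : 'I_s -> R) : R :=
  \sum_(E in T) \prod_(i in E) x i.

Definition std_simplex (R : realType) (s : nat) : set ('I_s -> R) :=
  [set x | (forall i, 0 <= x i) /\ \sum_(i < s) x i = 1].

(* Lagrangian: max (= sup, attained by compactness) of p_T over the simplex *)
Definition lagrangian (R : realType) (s : nat) (T : {set {set 'I_s}}) : R :=
  sup [set lagr_poly T x | x in @std_simplex R s].

From mathcomp Require Import all_boot all_order all_algebra.
From mathcomp Require Import all_classical all_reals.
From mathcomp Require Import lra.
Set Implicit Arguments. Unset Strict Implicit. Unset Printing Implicit Defensive.
Import Order.TTheory GRing.Theory Num.Theory.
Local Open Scope ring_scope.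

(* A 3-graph on five vertices with at most eight edges misses some triple t of
   K_5^(3), which has ten, so its Lagrangian is at most that of K_5^(3) - t.
   Writing t = {a,b,c} and {d,e} for the remaining vertices,
   p_{K - t}(x) = e_2(x_a,x_b,x_c) (x_d + x_e) + (x_a + x_b + x_c) x_d x_e, and with
   u = x_a + x_b + x_c, AM-GM bounds this by u^2 (1 - u)/3 + u (1 - u)^2/4, whose
   maximum on [0,1] (about 0.07329, near u = 0.535) is below 147/2000 < 2/27 - 1/2000. *)

Section SortedTriples.
Variable n : nat.

Definition set3 (p : 'I_n * 'I_n * 'I_n) : {set 'I_n} := [set p.1.1; p.1.2; p.2].

Definition increasing3 (p : 'I_n * 'I_n * 'I_n) : bool := (p.1.1 < p.1.2 < p.2)%N.

Lemma sorted_enum_ord (A : {set 'I_n}) : sorted ltn (map val (enum A)).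
Proof.
rewrite -[enum _](eq_filter (mem_enum _)) -(eq_filter (mem_map val_inj _)).
by rewrite -filter_map (sorted_filter ltn_trans) // unlock val_ord_enum iota_ltn_sorted.
Qed.

Lemma enum_set3 (p : 'I_n * 'I_n * 'I_n) :
  increasing3 p -> enum (set3 p) = [:: p.1.1; p.1.2; p.2].
Proof.
case: p => [[i j] k] /andP[/= ij jk].
have lt_trans : transitive (relpre (val : 'I_n -> nat) ltn).
  by move=> ? ? ?; apply: ltn_trans.
apply: (irr_sorted_eq lt_trans (fun l => ltnn (val l))).
- by rewrite -sorted_map sorted_enum_ord.
- by rewrite /= ij jk.
- by move=> l; rewrite mem_enum !inE /= orbA.
Qed.

Lemma prod_set3 (V : comPzSemiRingType) (F : 'I_n -> V) p :
  increasing3 p -> \prod_(i in set3 p) F i = F p.1.1 * F p.1.2 * F p.2.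
Proof. by move/enum_set3; rewrite -big_enum => ->; rewrite !big_cons big_nil /= mulr1 mulrA. Qed.

Lemma set3_enum (A : {set 'I_n}) (a b c : 'I_n) :
  enum A = [:: a; b; c] -> A = set3 (a, b, c).
Proof. by move=> eA; apply/setP => l; rewrite -mem_enum eA !inE orbA. Qed.

Lemma big_card3 (V : nmodType) (F : {set 'I_n} -> V) :
  \sum_(A : {set 'I_n} | #|A| == 3) F A = \sum_(p | increasing3 p) F (set3 p).
Proof.
rewrite [RHS](partition_big set3 (fun A => #|A| == 3)) /=; last first.
  by move=> p /enum_set3 ep; rewrite cardE ep.
apply: eq_bigr => A /eqP; rewrite cardE.
have := sorted_enum_ord A; have := set3_enum (A := A).
case: (enum A) => [|a [|b [|c []]]] // /(_ a b c erefl) -> /= /and3P[ab bc _] _.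
rewrite (big_pred1 (a, b, c)) // => p.
have abc : increasing3 (a, b, c) by rewrite /increasing3 /= ab bc.
apply/andP/eqP => [[incr_p /eqP e]|->]; last by rewrite abc eqxx.
by move: (enum_set3 incr_p); rewrite e enum_set3 //; case: p {incr_p e} => [[? ?] ?] [-> -> ->].
Qed.

End SortedTriples.

Definition complete3 (s : nat) : {set {set 'I_s}} := [set E : {set 'I_s} | #|E| == 3].

Section LagrangePolynomial.
Variables (R : realType) (s : nat).
Implicit Types (T : {set {set 'I_s}}) (x : 'I_s -> R).

Lemma lagr_poly_subset T T' x :
  (forall i, 0 <= x i) -> T \subset T' -> lagr_poly T x <= lagr_poly T' x.
Proof.
move=> x_ge0 sTT'; rewrite /lagr_poly [leRHS](big_setID T) /= (finset.setIidPr sTT') lerDl.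
by apply: sumr_ge0 => E _; apply: prodr_ge0.
Qed.

Lemma lagr_poly_setD1 T x t :
  t \in T -> lagr_poly (T :\ t) x = lagr_poly T x - \prod_(i in t) x i.
Proof. by move=> tT; rewrite /lagr_poly (big_setD1 t tT) /= addrC addrK. Qed.

Lemma lagr_poly_imset r (f : 'I_s -> 'I_r) T (x : 'I_r -> R) :
  injective f -> lagr_poly [set f @: E | E : {set 'I_s} in T] x = lagr_poly T (x \o f).
Proof.
move=> f_inj; rewrite /lagr_poly big_imset /=; last by move=> ? ? _ _; apply: imset_inj.
by apply: eq_bigr => E _; rewrite big_imset // => ? ? _ _; apply: f_inj.
Qed.

Lemma complete3_imset (f : 'I_s -> 'I_s) :
  injective f -> [set f @: E | E : {set 'I_s} in complete3 s] = complete3 s.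
Proof.
move=> f_inj; apply/eqP; rewrite eqEcard card_imset ?leqnn ?andbT; last exact: imset_inj.
by apply/fintype.subsetP => _ /imsetP[E + ->]; rewrite !inE card_imset.
Qed.

Lemma exists_missing_triple T :
  is_3graph T -> (#|T| < 'C(s, 3))%N ->
  exists2 t, t \in complete3 s & T \subset complete3 s :\ t.
Proof.
move=> /forallP T3 T_small.
have sT : T \subset complete3 s by apply/fintype.subsetP => E ET; have := T3 E; rewrite ET inE.
have /properP[_ [t tK tT]] : T \proper complete3 s.
  by rewrite properEcard sT /complete3 card_draws card_ord.
by exists t; rewrite // subsetD1 sT.
Qed.

Lemma lagrangian_le T (b : R) : (0 < s)%N ->
  (forall x, (forall i, 0 <= x i) -> \sum_(i < s) x i = 1 -> lagr_poly T x <= b) ->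
  lagrangian R T <= b.
Proof.
move=> s_gt0 le_b; apply: ge_sup => [|_ [x [x_ge0 x1] <-]]; last exact: le_b.
exists (lagr_poly T (fun=> s%:R^-1)), (fun=> s%:R^-1) => //; split.
  by move=> i; rewrite invr_ge0 ler0n.
by rewrite sumr_const card_ord -[LHS]mulr_natr mulVf // pnatr_eq0 -lt0n.
Qed.

End LagrangePolynomial.

Section UniqFive.
Variables (R : realType) (x : 'I_5 -> R) (a b c d e : 'I_5).
Hypothesis abcde_uniq : uniq [:: a; b; c; d; e].

Let f (i : 'I_5) : 'I_5 := nth a [:: a; b; c; d; e] i.

Let f_inj : injective f.
Proof. by move=> i j /eqP; rewrite nth_uniq // => /eqP/val_inj. Qed.

Lemma sum_uniq5 : \sum_(i < 5) x i = x a + x b + x c + x d + x e.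
Proof.
by rewrite (reindex_inj f_inj) !big_ord_recl big_ord0 /= addr0 !addrA.
Qed.

Lemma lagr_poly_complete3_uniq5 :
  lagr_poly (complete3 5) x =
    x a * x b * x c + x a * x b * x d + x a * x b * x e + x a * x c * x d
  + x a * x c * x e + x a * x d * x e + x b * x c * x d + x b * x c * x e
  + x b * x d * x e + x c * x d * x e.
Proof.
rewrite -(complete3_imset f_inj) lagr_poly_imset // /lagr_poly.
under eq_bigl do rewrite inE.
rewrite big_card3.
under eq_bigr => p /prod_set3 -> do [].
rewrite big_mkcond.
transitivity (\sum_(i < 5) \sum_(j < 5) \sum_(k < 5)
  (if increasing3 (i, j, k) then x (f i) * x (f j) * x (f k) else 0)).
  by rewrite pair_bigA pair_bigA; apply: eq_bigr => -[[i j] k].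
rewrite !big_ord_recl !big_ord0 /=.
lra.
Qed.

End UniqFive.

Lemma poly_K5_minus_edge_le (R : realFieldType) (a b c d e : R) :
  0 <= a -> 0 <= b -> 0 <= c -> 0 <= d -> 0 <= e -> a + b + c + d + e = 1 ->
  (a * b + a * c + b * c) * (d + e) + (a + b + c) * (d * e) <= 147 / 2000.
Proof.
move=> a0 b0 c0 d0 e0 sum1.
have e2_le : a * b + a * c + b * c <= (a + b + c) ^+ 2 / 3.
  have := sqr_ge0 (a - b); have := sqr_ge0 (b - c); have := sqr_ge0 (c - a); nra.
have de_le : d * e <= (d + e) ^+ 2 / 4 by have := sqr_ge0 (d - e); nra.
have u_ge0 : 0 <= a + b + c by lra.
have v_ge0 : 0 <= d + e by lra.
have u_le1 : a + b + c <= 1 by lra.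
have := ler_wpM2r v_ge0 e2_le; have := ler_wpM2l u_ge0 de_le.
have -> : d + e = 1 - (a + b + c) by lra.
move: u_ge0 u_le1; move: (a + b + c) => u u_ge0 u_le1.
(* 147/2000 - u^2 (1 - u)/3 - u (1 - u)^2/4 = ((u - 107/200)^2 (u + 307/100) + r(u))/12
   with r affine and positive on [0,1]. *)
have := mulr_ge0 u_ge0 (sqr_ge0 (u - 107 / 200)); have := sqr_ge0 (u - 107 / 200).
nra.
Qed.

Lemma lagr_poly_K5_minus_edge_le (R : realType) (t : {set 'I_5}) (x : 'I_5 -> R) :
  t \in complete3 5 -> (forall i, 0 <= x i) -> \sum_(i < 5) x i = 1 ->
  lagr_poly (complete3 5 :\ t) x <= 147 / 2000.
Proof.
rewrite inE => /eqP t3 x_ge0 x1; rewrite lagr_poly_setD1 ?inE ?t3 // -big_enum.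
have : uniq (enum t ++ enum (~: t)).
  rewrite cat_uniq !enum_uniq andbT /=; apply/hasPn => i.
  by rewrite !mem_enum inE.
have : size (enum (~: t)) = 2 by rewrite -cardE cardsCs finset.setCK card_ord t3.
have : size (enum t) = 3 by rewrite -cardE.
case: (enum t) => [|a [|b [|c []]]] //; case: (enum (~: t)) => [|d [|e []]] // _ _ abcde.
rewrite !big_cons big_nil /= mulr1 mulrA (lagr_poly_complete3_uniq5 x abcde).
rewrite (sum_uniq5 x abcde) in x1.
have := poly_K5_minus_edge_le (x_ge0 a) (x_ge0 b) (x_ge0 c) (x_ge0 d) (x_ge0 e) x1.
lra.
Qed.

Theorem lemma4p3 (R : realType) :
  exists c : R, 0 < c /\
    forall T : {set {set 'I_5}}, @is_3graph 5 T -> (#|T| <= 8)%N ->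
      @lagrangian R 5 T < 2 / 27 - c.
Proof.
exists (1 / 2000); split => [|T T3 T8]; first lra.
have [t tK sT] := exists_missing_triple T3 (leq_ltn_trans T8 (isT : 8 < 'C(5, 3))%N).
suff : lagrangian R T <= 147 / 2000 by lra.
apply: lagrangian_le => // x x_ge0 x1.
apply: le_trans (lagr_poly_K5_minus_edge_le tK x_ge0 x1).
exact: lagr_poly_subset.
Qed.
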